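(* For any constant $\alpha>0$, there exists $c>0$ (depending on $\alpha$) such that there is no $(1, o(1/n))$-differentially private (central model) $(\alpha, cm^2)$-approximation algorithm for the rank aggregation problem when $n=o(\sqrt m)$.
   Context: Items are $[m]=\{1,\dots,m\}$; $\mathbb{S}_m$ is the set of rankings (permutations) of $[m]$, $\pi(j)$ being the position of item $j$. The Kendall tau distance is $K(\pi_1,\pi_2)=|\{(i,j):\pi_1(i)<\pi_1(j),\ \pi_2(i)>\pi_2(j)\}|$. An input is a list $\Pi=\{\pi_1,\dots,\pi_n\}$ of $n$ rankings. Define $\bar K(\sigma,\Pi)=\frac1n\sum_k K(\sigma,\pi_k)$ and $\mathrm{OPT}(\Pi)=\min_\sigma\bar K(\sigma,\Pi)$. A randomized algorithm is an $(\alpha,\beta)$-approximation algorithm if for every input $\Pi$ its output $\sigma$ satisfies $\mathbb{E}[\bar K(\sigma,\Pi)]\le\alpha\,\mathrm{OPT}(\Pi)+\beta$. Two inputs are neighboring if they differ in a single ranking; an algorithm $\mathcal{M}$ is $(\epsilon,\delta)$-DP (central model) if for all neighboring $\Pi,\Pi'$ and all output sets $S$, $\Pr[\mathcal{M}(\Pi)\in S]\le e^{\epsilon}\Pr[\mathcal{M}(\Pi')\in S]+\delta$. *)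

From HB Require Import structures.
From mathcomp Require Import all_boot all_order all_fingroup all_algebra.
From mathcomp Require Import reals sequences exp.
Set Implicit Arguments. Unset Strict Implicit. Unset Printing Implicit Defensive.
Import Order.TTheory GRing.Theory Num.Theory.
Local Open Scope ring_scope.

(* A ranking of the m items 'I_m is a permutation pi : 'S_m; pi j is the
   position of item j.  An input is a list of n rankings. *)
Definition input (n m : nat) := {ffun 'I_n -> 'S_m}.

Definition kendall (m : nat) (p1 p2 : 'S_m) : nat :=
  #|[set ij : 'I_m * 'I_m | (p1 ij.1 < p1 ij.2)%N && (p2 ij.1 > p2 ij.2)%N]|.

Definition sumK (n m : nat) (P : input n m) (s : 'S_m) : nat :=
  (\sum_(k < n) kendall s (P k))%N.

Definition Kbar (R : realType) (n m : nat) (s : 'S_m) (P : input n m) : R :=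
  (sumK P s)%:R / n%:R.

Definition OPT (R : realType) (n m : nat) (P : input n m) : R :=
  (sumK P [arg min_(s < (1%g : 'S_m)) sumK P s])%:R / n%:R.

(* A randomized algorithm: maps each input to a probability distribution
   on the output rankings. *)
Definition mechanism (R : realType) (n m : nat) := input n m -> {ffun 'S_m -> R}.

Definition is_randomized_alg (R : realType) (n m : nat) (M : mechanism R n m) :=
  forall P : input n m, (forall s, 0 <= M P s) /\ \sum_s M P s = 1.

Definition neighboring (n m : nat) (P P' : input n m) :=
  exists i : 'I_n, forall j : 'I_n, j != i -> P j = P' j.

Definition is_DP (R : realType) (n m : nat) (eps delta : R) (M : mechanism R n m) :=
  forall P P' : input n m, neighboring P P' ->
  forall S : {set 'S_m},
    \sum_(s in S) M P s <= expR eps * \sum_(s in S) M P' s + delta.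

Definition is_approx (R : realType) (n m : nat) (alpha beta : R) (M : mechanism R n m) :=
  forall P : input n m, \sum_s M P s * Kbar R s P <= alpha * OPT R P + beta.

From HB Require Import structures.
From mathcomp Require Import all_boot all_order all_fingroup all_algebra.
From mathcomp Require Import reals sequences exp.
From mathcomp Require Import ring lra zify.
Set Implicit Arguments. Unset Strict Implicit. Unset Printing Implicit Defensive.
Import Order.TTheory GRing.Theory Num.Theory.
Local Open Scope ring_scope.

(* The hard instance: with d = m/2, draw an n x m table X of bits whose columns
   first draw p_j ~ Beta(a, a), a = 1/(16(alpha + 1)), and then n i.i.d.
   Bernoulli(p_j) bits.  Voter i ranks the items j < d with X i j set first,
   the L = m - d items >= d as a fixed middle block, and the other items j < d
   last.  For an output ranking s let w_j(s) count the middle items placed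
   after j, and let q_ij be the posterior probability of X i j given the other
   rows.

   Accuracy: the Kendall cost of s is at least L * sum_j S_j minus
   sum_j w_j(s) (2 S_j - n), S_j being the column sums, while the majority
   ranking gives n * OPT <= (4m/n) sum_j S_j (n - S_j), whose mean is O(a m n d).
   So an accurate mechanism makes sum_i E[sum_j w_j(s) (X i j - q_ij)], which
   equals a/(n - 1 + 2a) * E[sum_j w_j(s) (2 S_j - n)], of order a m^2.

   Privacy: redrawing row i from its conditional law preserves the prior, so
   the correlation of row i with an output computed from the redrawn table has
   mean zero and variance at most m L^2 / 4; (1, delta)-privacy transfers this
   to the actual row up to a factor e and an additive delta m L.  The total is
   O(n m (sqrt m + delta m)), which is o(a m^2) when n = o(sqrt m) and
   delta = o(1/n). *)

Definition b2R {R : nzSemiRingType} (t : bool) : R := (t : nat)%:R.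

Lemma b2R_true {R : nzSemiRingType} : b2R true = 1 :> R.
Proof. exact: mulr1n. Qed.

Lemma b2R_false {R : nzSemiRingType} : b2R false = 0 :> R.
Proof. exact: mulr0n. Qed.

Lemma sum_affine (R : comNzRingType) (T : finType) (p f g : T -> R) c1 c2 c3 :
  \sum_t p t = 1 ->
  \sum_t p t * (c1 * f t + c2 * g t + c3) =
  c1 * (\sum_t p t * f t) + c2 * (\sum_t p t * g t) + c3.
Proof.
move=> p1; rewrite -[c3 in RHS]mulr1 -p1 !big_distrr -!big_split /=.
by apply: eq_bigr => t _; ring.
Qed.

(** * Products of Bernoulli laws *)

Section ProductBernoulli.
Variables (R : numDomainType) (I : finType).

Definition bern (p : R) (b : bool) : R := if b then p else 1 - p.

Definition bern_prod (p : I -> R) (b : {ffun I -> bool}) : R := \prod_k bern (p k) (b k).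

Lemma sum_bern_prod_prod p (G : I -> bool -> R) :
  \sum_b bern_prod p b * \prod_k G k (b k) =
  \prod_k (p k * G k true + (1 - p k) * G k false).
Proof.
transitivity (\prod_k \sum_t bern (p k) t * G k t); last first.
  by apply: eq_bigr => k _; rewrite big_bool.
rewrite bigA_distr_bigA /=; apply: eq_bigr => b _.
by rewrite /bern_prod -big_split.
Qed.

Lemma bern_prod_sum1 p : \sum_b bern_prod p b = 1.
Proof.
have := sum_bern_prod_prod p (fun _ _ => 1).
rewrite (eq_bigr (bern_prod p)) => [->|b _]; last by rewrite big1_eq mulr1.
by apply: big1 => k _; rewrite !mulr1 addrC subrK.
Qed.

Lemma bern_prod_ge0 p : (forall k, 0 <= p k <= 1) -> forall b, 0 <= bern_prod p b.
Proof.
move=> p01 b; apply: prodr_ge0 => k _; have /andP[p0 p1] := p01 k.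
by rewrite /bern; case: (b k); rewrite ?subr_ge0.
Qed.

Lemma bern_prod_marginal p j (g : bool -> R) :
  \sum_b bern_prod p b * g (b j) = p j * g true + (1 - p j) * g false.
Proof.
pose G k t := if k == j then g t else 1.
have GE (b : {ffun I -> bool}) : \prod_k G k (b k) = g (b j).
  by rewrite (bigD1 j) //= /G eqxx big1 ?mulr1 // => k /negPf ->.
under eq_bigr => b _ do rewrite -GE.
rewrite sum_bern_prod_prod (bigD1 j) //= /G eqxx big1 ?mulr1 // => k /negPf ->.
by rewrite !mulr1 addrC subrK.
Qed.

Lemma bern_prod_marginal2 p j l (g h : bool -> R) : j != l ->
  \sum_b bern_prod p b * (g (b j) * h (b l)) =
  (p j * g true + (1 - p j) * g false) * (p l * h true + (1 - p l) * h false).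
Proof.
move=> jl; pose G k t := if k == j then g t else if k == l then h t else 1.
have Gjl : forall k, k != j -> k != l -> forall t, G k t = 1.
  by move=> k /negPf kj /negPf kl t; rewrite /G kj kl.
have Gj t : G j t = g t by rewrite /G eqxx.
have Gl t : G l t = h t by rewrite /G eq_sym (negPf jl) eqxx.
have GE (b : {ffun I -> bool}) : \prod_k G k (b k) = g (b j) * h (b l).
  rewrite (bigD1 j) //= (bigD1 l) 1?eq_sym //= big1 => [|k /andP[kj kl]]; last exact: Gjl.
  by rewrite Gj Gl mulr1.
under eq_bigr => b _ do rewrite -GE.
rewrite sum_bern_prod_prod (bigD1 j) //= (bigD1 l) 1?eq_sym //= big1.
  by rewrite !Gj !Gl mulr1.
by move=> k /andP[kj kl]; rewrite !Gjl // !mulr1 addrC subrK.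
Qed.

Lemma bern_prod_variance p (w : I -> R) :
  \sum_b bern_prod p b * (\sum_j w j * (b2R (b j) - p j)) ^+ 2 =
  \sum_j w j ^+ 2 * (p j * (1 - p j)).
Proof.
pose u j (b : {ffun I -> bool}) := w j * (b2R (b j) - p j).
have sqrE b : (\sum_j u j b) ^+ 2 = \sum_j \sum_l u j b * u l b.
  by rewrite expr2 big_distrl; apply: eq_bigr => j _; rewrite big_distrr.
under eq_bigr => b _ do rewrite sqrE big_distrr /=.
rewrite exchange_big; apply: eq_bigr => j _ /=.
under eq_bigr => b _ do rewrite big_distrr /=.
rewrite exchange_big (bigD1 j) //= [X in _ + X]big1 ?addr0 => [|l lj].
  have := bern_prod_marginal p j (fun t => w j * (b2R t - p j) * (w j * (b2R t - p j))).
  by rewrite /u => ->; rewrite b2R_true b2R_false; ring.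
have jl : j != l by rewrite eq_sym.
have := bern_prod_marginal2 p (fun t => w j * (b2R t - p j)) (fun t => w l * (b2R t - p l)) jl.
by rewrite /u => ->; rewrite b2R_true b2R_false; ring.
Qed.

End ProductBernoulli.

(** * Rankings of the hard instance *)

Section RankPermutation.
Variables (m : nat) (key : 'I_m -> nat).
Hypothesis key_inj : injective key.
Local Open Scope nat_scope.

Definition key_rank (i : 'I_m) : nat := #|[set i' | key i' < key i]|.

Lemma key_rank_lt i : key_rank i < m.
Proof.
rewrite -[m]card_ord -cardsT; apply: proper_card; rewrite properT.
apply/negP => /eqP E; have : i \in [set i' | key i' < key i] by rewrite E inE.
by rewrite inE ltnn.
Qed.

Lemma key_rank_ltn i j : key i < key j -> key_rank i < key_rank j.
Proof.
move=> ij; apply: proper_card; apply/properP; split.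
  by apply/subsetP => k; rewrite !inE => /ltn_trans; apply.
by exists i; rewrite !inE ?ij // ltnn.
Qed.

Lemma key_rank_leq i j : key i <= key j -> key_rank i <= key_rank j.
Proof.
move=> ij; apply: subset_leq_card; apply/subsetP => k; rewrite !inE => /leq_trans; apply.
exact: ij.
Qed.

Definition key_rank_ord i : 'I_m := Ordinal (key_rank_lt i).

Lemma key_rank_ord_inj : injective key_rank_ord.
Proof.
move=> i j /(congr1 val) /= E; apply: key_inj; apply/eqP; rewrite eqn_leq.
by case: (ltngtP (key i) (key j)) => // /key_rank_ltn; rewrite E ltnn.
Qed.

Definition rank_perm : 'S_m := perm key_rank_ord_inj.

Lemma rank_perm_ltE i j : (rank_perm i < rank_perm j) = (key i < key j).
Proof.
rewrite !permE /=; case: (ltnP (key i) (key j)) => [/key_rank_ltn //|/key_rank_leq].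
by rewrite leqNgt => /negbTE.
Qed.

End RankPermutation.

Lemma kendallE (m : nat) (p1 p2 : 'S_m) :
  kendall p1 p2 = (\sum_u \sum_v ((p1 u < p1 v) && (p2 v < p2 u)))%N.
Proof.
rewrite /kendall -sum1_card big_mkcond /= pair_big /=.
by apply: eq_bigr => [[u v]] _; rewrite inE /=; case: ifP.
Qed.

Section Encoding.
Variables (m d : nat).
Local Open Scope nat_scope.

Definition encode_key (x : {ffun 'I_m -> bool}) (i : 'I_m) : nat :=
  if i < d then (if x i then nat_of_ord i else 2 * m + i) else m + i.

Lemma encode_key_inj x : injective (encode_key x).
Proof.
move=> i j; rewrite /encode_key; have := ltn_ord i; have := ltn_ord j => hi hj E.
apply: ord_inj; move: E.
by case: (ltnP i d) => ?; case: (ltnP j d) => ?; case: (x i); case: (x j) => /=; lia.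
Qed.

Definition encode x : 'S_m := rank_perm (@encode_key_inj x).

Lemma encode_ltE x i j : (encode x i < encode x j) = (encode_key x i < encode_key x j).
Proof. exact: rank_perm_ltE. Qed.

Definition mismatch (x y : {ffun 'I_m -> bool}) (j : 'I_m) : bool := (j < d) && (x j != y j).

Lemma kendall_encode_le x y :
  kendall (encode y) (encode x) <= 2 * m * \sum_j mismatch x y j.
Proof.
rewrite kendallE.
apply: (@leq_trans (\sum_u \sum_v ((mismatch x y u : nat) + mismatch x y v))).
  apply: leq_sum => u _; apply: leq_sum => v _.
  rewrite !encode_ltE /mismatch /encode_key.
  case: (ltnP u d) => hu; case: (ltnP v d) => hv /=;
  case: (x u) (y u) (x v) (y v) => [] [] [] [] //=; lia.
rewrite (eq_bigr (fun u => m * mismatch x y u + \sum_v (mismatch x y v : nat))); last first.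
  by move=> u _; rewrite big_split /= sum_nat_const card_ord.
rewrite big_split /= sum_nat_const card_ord -big_distrr /=; lia.
Qed.

Definition mid_after (s : 'S_m) (j : 'I_m) : nat :=
  #|[set f : 'I_m | (d <= f) && (s j < s f)]|.

Lemma sum_ord_geq : \sum_(f : 'I_m) (d <= f) = m - d.
Proof.
rewrite -(big_mkord xpredT (fun f => (d <= f : nat))).
elim: m => [|k IH]; first by rewrite big_geq.
by rewrite big_nat_recr //= IH; case: (leqP d k) => /=; lia.
Qed.

Lemma mid_afterE s j : mid_after s j = \sum_(f : 'I_m) ((d <= f) && (s j < s f)).
Proof. by rewrite /mid_after -sum1dep_card big_mkcond; apply: eq_bigr => f _; case: ifP. Qed.

Lemma mid_after_le s j : mid_after s j <= m - d.
Proof.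
by rewrite mid_afterE -sum_ord_geq; apply: leq_sum => f _; case: (d <= f); rewrite /= ?leq_b1.
Qed.

Lemma mid_before_after (s : 'S_m) (u : 'I_m) : u < d ->
  \sum_(f : 'I_m) ((d <= f) && (s f < s u)) + mid_after s u = m - d.
Proof.
move=> ud; rewrite mid_afterE -big_split -sum_ord_geq /=; apply: eq_bigr => f _.
case: (leqP d f) => //= df; have uf : (s u : nat) != s f.
  by apply/eqP => /ord_inj /perm_inj uf; move: ud; rewrite uf ltnNge df.
by case: ltngtP uf.
Qed.

Lemma kendall_ge_cross (s p : 'S_m) :
  \sum_(u : 'I_m | u < d) \sum_(v : 'I_m | d <= v)
    (((s u < s v) && (p v < p u)) + ((s v < s u) && (p u < p v))) <= kendall s p.
Proof.
pose c (u v : 'I_m) : nat := (s u < s v) && (p v < p u).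
pose cross (u v : 'I_m) : nat := (u < d) && (d <= v).
have crossE (F : 'I_m -> 'I_m -> nat) :
    \sum_(u : 'I_m | u < d) \sum_(v : 'I_m | d <= v) F u v = \sum_u \sum_v cross u v * F u v.
  rewrite big_mkcond; apply: eq_bigr => u _; rewrite big_mkcond /= /cross.
  case: (u < d) => /=; last by rewrite big1.
  by apply: eq_bigr => v _; case: (d <= v); rewrite ?mul1n.
rewrite (crossE (fun u v => c u v + c v u)) kendallE.
under eq_bigr => u _ do under eq_bigr => v _ do rewrite mulnDr.
rewrite (eq_bigr (fun u => \sum_v cross u v * c u v + \sum_v cross u v * c v u));
  last by move=> u _; rewrite big_split.
rewrite big_split /= [X in _ + X <= _]exchange_big -big_split /=.
apply: leq_sum => u _; rewrite -big_split; apply: leq_sum => v _ /=.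
by rewrite /cross /c; case: (ltnP u d); case: (ltnP v d) => /=; lia.
Qed.

Lemma kendall_encode_ge (s : 'S_m) (x : {ffun 'I_m -> bool}) :
  \sum_(j : 'I_m | j < d) (if x j then m - d - mid_after s j else mid_after s j)
  <= kendall s (encode x).
Proof.
apply: leq_trans (kendall_ge_cross s (encode x)); apply: eq_leq.
apply: eq_bigr => u ud.
transitivity (\sum_(v : 'I_m | d <= v) ((if x u then s v < s u else s u < s v) : nat)).
  case: (x u).
    rewrite -(mid_before_after s ud) addnK [RHS]big_mkcond.
    by apply: eq_bigr => v _; case: (d <= v).
  by rewrite mid_afterE [RHS]big_mkcond; apply: eq_bigr => v _; case: (d <= v).
apply: eq_bigr => v dv; rewrite !encode_ltE /encode_key ud (ltnNge v d) dv /=.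
have := ltn_ord u; have := ltn_ord v; case: (x u) => hv hu.
  have -> : (u < m + v) = true by apply/idP; lia.
  have -> : (m + v < u) = false by apply/negP; lia.
  by rewrite andbF andbT.
have -> : (2 * m + u < m + v) = false by apply/negP; lia.
have -> : (m + v < 2 * m + u) = true by apply/idP; lia.
by rewrite andbF andbT addn0.
Qed.

End Encoding.

Lemma dp_sum_le (R : realFieldType) (T : finType) (mu1 mu2 h : T -> R) (e delta B : R) :
  (forall S : {set T}, \sum_(s in S) mu1 s <= e * \sum_(s in S) mu2 s + delta) ->
  0 <= B -> (forall s, 0 <= h s <= B) ->
  \sum_s mu1 s * h s <= e * \sum_s mu2 s * h s + delta * B.
Proof.
move=> dp B0 h0B.
(* Test the privacy inequality on the set where mu1 exceeds e * mu2. *)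
pose S := [set s | e * mu2 s < mu1 s].
have pointwise s : mu1 s * h s <=
    (if s \in S then (mu1 s - e * mu2 s) * B else 0) + e * (mu2 s * h s).
  have /andP[hs0 hsB] := h0B s; rewrite inE mulrA.
  case: ltrP => [lt_mu|le_mu].
    have : 0 <= mu1 s - e * mu2 s by rewrite subr_ge0 ltW.
    by move=> d0; have := ler_wpM2l d0 hsB; nra.
  by rewrite add0r ler_wpM2r.
apply: le_trans (ler_sum _ (fun s _ => pointwise s)) _.
rewrite big_split /= -big_mkcond /= -big_distrr /= addrC lerD2l -big_distrl /=.
apply: ler_wpM2r => //; rewrite sumrB -big_distrr /= lerBlDl.
exact: (dp S).
Qed.

Lemma maxr0_le_quad (R : realFieldType) (h t : R) : 0 < t ->
  Num.max h 0 <= 1 / 2 * h + 1 / (4 * t) * h ^+ 2 + t / 4.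
Proof.
move=> t0; have t4 : 0 < 4 * t by rewrite mulr_gt0.
rewrite ge_max; apply/andP; split.
  have -> : 1 / 2 * h + 1 / (4 * t) * h ^+ 2 + t / 4 = h + (h - t) ^+ 2 / (4 * t).
    by field; rewrite gt_eqF.
  by rewrite lerDl divr_ge0 ?sqr_ge0 // ltW.
have -> : 1 / 2 * h + 1 / (4 * t) * h ^+ 2 + t / 4 = (h + t) ^+ 2 / (4 * t).
  by field; rewrite gt_eqF.
by rewrite divr_ge0 ?sqr_ge0 // ltW.
Qed.

(** * The Beta-Bernoulli prior *)

Section BetaBernoulliPrior.
Variables (R : realType) (n m : nat) (a : R).
Hypotheses (a_gt0 : 0 < a) (n_gt0 : (0 < n)%N).

Definition Row := {ffun 'I_m -> bool}.
Definition Table := {ffun 'I_n -> Row}.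

Definition set_row (X : Table) (i : 'I_n) (b : Row) : Table :=
  [ffun k => if k == i then b else X k].

Definition colsum (X : Table) (j : 'I_m) : nat := (\sum_k X k j)%N.

Definition colsum_but (X : Table) (i : 'I_n) (j : 'I_m) : nat :=
  (\sum_(k | k != i) X k j)%N.

Definition rising (t : nat) : R := \prod_(k < t) (a + k%:R).

Definition col_weight (s : nat) : R := rising s * rising (n - s).

(* Up to normalization, [weight] is the law of a table whose columns j draw
   p_j ~ Beta(a, a) and then n i.i.d. Bernoulli(p_j) bits. *)
Definition weight (X : Table) : R := \prod_j col_weight (colsum X j).

Definition prior (X : Table) : R := weight X / \sum_Y weight Y.

Definition den : R := n%:R - 1 + 2 * a.

(* Posterior probability that a bit is set, given s set bits among the
   other n - 1 bits of its column. *)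
Definition pred_prob (s : nat) : R := (s%:R + a) / den.

Definition cond_prob (X : Table) (i : 'I_n) (j : 'I_m) : R := pred_prob (colsum_but X i j).

Definition cond_row (X : Table) (i : 'I_n) (b : Row) : R := bern_prod (cond_prob X i) b.

Lemma den_gt0 : 0 < den.
Proof. have n1 : 1 <= n%:R :> R by rewrite ler1n. move: a_gt0; rewrite /den; lra. Qed.

Lemma n_gt0R : 0 < n%:R :> R.
Proof. by rewrite ltr0n. Qed.

Lemma colsum_split X i j : colsum X j = (colsum_but X i j + X i j)%N.
Proof. by rewrite /colsum (bigD1 i) //= addnC. Qed.

Lemma set_row_at X i b : set_row X i b i = b.
Proof. by rewrite ffunE eqxx. Qed.

Lemma set_row_set_row X i b c : set_row (set_row X i b) i c = set_row X i c.
Proof. by apply/ffunP => k; rewrite !ffunE; case: (k == i). Qed.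

Lemma set_row_id X i : set_row X i (X i) = X.
Proof. by apply/ffunP => k; rewrite !ffunE; case: eqP => [->|]. Qed.

Lemma colsum_but_set_row X i b j : colsum_but (set_row X i b) i j = colsum_but X i j.
Proof. by apply: eq_bigr => k /negPf ki; rewrite ffunE ki. Qed.

Lemma colsum_set_row X i b j : colsum (set_row X i b) j = (colsum_but X i j + b j)%N.
Proof. by rewrite (colsum_split _ i) colsum_but_set_row set_row_at. Qed.

Lemma cond_prob_set_row X i b j : cond_prob (set_row X i b) i j = cond_prob X i j.
Proof. by rewrite /cond_prob colsum_but_set_row. Qed.

Lemma cond_row_set_row X i b c : cond_row (set_row X i b) i c = cond_row X i c.
Proof. by apply: eq_bigr => j _; rewrite cond_prob_set_row. Qed.

Lemma colsum_le X j : (colsum X j <= n)%N.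
Proof.
rewrite -[n in (_ <= n)%N]card_ord -sum1_card; apply: leq_sum => k _; exact: leq_b1.
Qed.

Lemma colsum_but_le X i j : (colsum_but X i j <= n.-1)%N.
Proof.
apply: (@leq_trans (\sum_(k | k != i) 1)%N); first by apply: leq_sum => k _; case: (X k j).
by rewrite sum1_card cardC1 card_ord.
Qed.

Lemma cond_prob01 X i j : 0 <= cond_prob X i j <= 1.
Proof.
have hs : (colsum_but X i j)%:R <= n%:R - 1 :> R.
  by rewrite -(prednK n_gt0) -natr1 addrK ler_nat colsum_but_le.
have := den_gt0; rewrite /cond_prob /pred_prob /den => d0.
apply/andP; split; first by apply: divr_ge0; [rewrite addr_ge0 ?ler0n // ltW | exact: ltW].
rewrite ler_pdivrMr // mul1r; move: a_gt0; lra.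
Qed.

Lemma cond_row_ge0 X i b : 0 <= cond_row X i b.
Proof. by apply: bern_prod_ge0 => j; exact: cond_prob01. Qed.

Lemma cond_row_sum1 X i : \sum_b cond_row X i b = 1.
Proof. exact: bern_prod_sum1. Qed.

Lemma risingS t : rising t.+1 = rising t * (a + t%:R).
Proof. by rewrite /rising big_ord_recr. Qed.

Lemma rising_gt0 t : 0 < rising t.
Proof. by apply: prodr_gt0 => k _; rewrite ltr_wpDr. Qed.

Lemma weight_gt0 X : 0 < weight X.
Proof. by apply: prodr_gt0 => j _; rewrite mulr_gt0 ?rising_gt0. Qed.

Lemma col_weight_balance s : (s <= n.-1)%N ->
  col_weight s.+1 * (1 - pred_prob s) = col_weight s * pred_prob s.
Proof.
move=> sn; have ns : (n - s = (n - s.+1).+1)%N.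
  by rewrite -(prednK n_gt0) in sn *; rewrite subSS subSn.
have nsR : (n - s.+1)%:R = n%:R - 1 - s%:R :> R.
  rewrite natrB; last by rewrite -(prednK n_gt0) in sn *; rewrite ltnS.
  by rewrite -natr1 opprD addrA addrAC.
have := den_gt0; rewrite /col_weight /pred_prob ns !risingS nsR /den => d0.
by field; rewrite gt_eqF.
Qed.

Lemma col_weight_bern s (x b : bool) : (s <= n.-1)%N ->
  col_weight (s + x) * bern (pred_prob s) b = col_weight (s + b) * bern (pred_prob s) x.
Proof.
by move=> sn; case: x; case: b; rewrite //= addn1 addn0 col_weight_balance.
Qed.

Lemma weight_balance X i b :
  weight X * cond_row X i b = weight (set_row X i b) * cond_row X i (X i).
Proof.
rewrite /weight /cond_row /bern_prod -!big_split /=; apply: eq_bigr => j _.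
by rewrite colsum_set_row (colsum_split X i) col_weight_bern // colsum_but_le.
Qed.

Lemma weight_sum_gt0 : 0 < \sum_X weight X.
Proof.
rewrite (bigD1 [ffun=> [ffun=> false]]) //= ltr_pwDl ?weight_gt0 //.
by apply: sumr_ge0 => Y _; exact: ltW (weight_gt0 Y).
Qed.

Lemma prior_gt0 X : 0 < prior X.
Proof. by rewrite divr_gt0 ?weight_gt0 ?weight_sum_gt0. Qed.

Lemma prior_sum1 : \sum_X prior X = 1.
Proof. by rewrite -big_distrl /= divff // gt_eqF // weight_sum_gt0. Qed.

Lemma prior_balance X i b :
  prior X * cond_row X i b = prior (set_row X i b) * cond_row X i (X i).
Proof. by rewrite /prior mulrAC weight_balance mulrAC. Qed.

Lemma prior_resample (F : Table -> R) i :
  \sum_X prior X * F X = \sum_X prior X * \sum_b cond_row X i b * F (set_row X i b).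
Proof.
symmetry.
transitivity (\sum_X \sum_b prior (set_row X i b) * cond_row X i (X i) * F (set_row X i b)).
  apply: eq_bigr => X _; rewrite big_distrr /=; apply: eq_bigr => b _.
  by rewrite mulrA prior_balance.
(* By detailed balance, the two sides differ by reindexing along this involution. *)
rewrite pair_bigA /=.
pose swap (p : Table * Row) := (set_row p.1 i p.2, p.1 i).
have swapK : involutive swap.
  by move=> [X b]; rewrite /swap /= set_row_set_row set_row_id set_row_at.
rewrite (reindex_inj (inv_inj swapK)) /=.
under eq_bigr => p _ do rewrite /swap /= set_row_set_row set_row_id set_row_at cond_row_set_row.
rewrite -(pair_bigA _ (fun X b => prior X * cond_row X i b * F X)) /=.
by apply: eq_bigr => X _; rewrite -big_distrl /= -big_distrr /= cond_row_sum1 mulr1 mulrC.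
Qed.

Lemma sum_prior_affine (f : Table -> R) c1 c2 :
  \sum_X prior X * (c1 * f X + c2) = c1 * (\sum_X prior X * f X) + c2.
Proof.
rewrite -[c2 in RHS]mulr1 -prior_sum1 !big_distrr -big_split /=.
by apply: eq_bigr => X _; ring.
Qed.

Lemma prior_resample_bit (i : 'I_n) (j : 'I_m) (h1 h2 : Table -> R) :
  (forall X b, h1 (set_row X i b) = h1 X) -> (forall X b, h2 (set_row X i b) = h2 X) ->
  \sum_X prior X * (b2R (X i j) * h1 X + (1 - b2R (X i j)) * h2 X) =
  \sum_X prior X * (cond_prob X i j * h1 X + (1 - cond_prob X i j) * h2 X).
Proof.
move=> h1i h2i; rewrite (prior_resample _ i); apply: eq_bigr => X _; congr (_ * _).
under eq_bigr => b _ do rewrite set_row_at h1i h2i.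
have := bern_prod_marginal (cond_prob X i) j (fun t => b2R t * h1 X + (1 - b2R t) * h2 X).
by rewrite b2R_true b2R_false => ->; ring.
Qed.

Lemma prior_resample_b2R (i : 'I_n) (j : 'I_m) (h : Table -> R) :
  (forall X b, h (set_row X i b) = h X) ->
  \sum_X prior X * (b2R (X i j) * h X) = \sum_X prior X * (cond_prob X i j * h X).
Proof.
move=> hi; have /= E := @prior_resample_bit i j h (fun _ => 0) hi (fun _ _ => erefl).
transitivity (\sum_X prior X * (b2R (X i j) * h X + (1 - b2R (X i j)) * 0)).
  by apply: eq_bigr => X _; rewrite mulr0 addr0.
by rewrite E; apply: eq_bigr => X _; rewrite mulr0 addr0.
Qed.

Lemma sum_b2R_col (X : Table) (j : 'I_m) : \sum_i b2R (X i j) = (colsum X j)%:R :> R.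
Proof. by rewrite /colsum natr_sum. Qed.

Lemma colsum_butE (X : Table) (i : 'I_n) (j : 'I_m) :
  (colsum_but X i j)%:R = (colsum X j)%:R - b2R (X i j) :> R.
Proof. by rewrite (colsum_split X i j) natrD addrK. Qed.

Lemma sum_col_affine (X : Table) (j : 'I_m) (A B : R) :
  \sum_i (A + B * b2R (X i j)) = n%:R * A + B * (colsum X j)%:R.
Proof. by rewrite big_split /= sumr_const card_ord -big_distrr /= sum_b2R_col mulr_natl. Qed.

Lemma sum_cond_prob (X : Table) (j : 'I_m) :
  \sum_i cond_prob X i j = (n%:R - 1) / den * (colsum X j)%:R + n%:R * a / den.
Proof.
have d0 := den_gt0.
rewrite (eq_bigr (fun i => (a / den + 1 / den * (colsum X j)%:R) + (- (1 / den)) * b2R (X i j))).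
  by rewrite sum_col_affine; field; rewrite gt_eqF.
by move=> i _; rewrite /cond_prob /pred_prob colsum_butE; field; rewrite gt_eqF.
Qed.

Lemma mean_colsum (j : 'I_m) : \sum_X prior X * (colsum X j)%:R = n%:R / 2.
Proof.
set ES := \sum_X _; have d0 := den_gt0.
have ES_fix : ES = (n%:R - 1) / den * ES + n%:R * a / den.
  rewrite -sum_prior_affine.
  under [RHS]eq_bigr => X _ do rewrite -sum_cond_prob big_distrr /=.
  rewrite /ES; under [LHS]eq_bigr => X _ do rewrite -sum_b2R_col big_distrr /=.
  rewrite exchange_big [RHS]exchange_big /=; apply: eq_bigr => i _.
  have /= E := @prior_resample_b2R i j (fun _ => 1) (fun _ _ => erefl).
  under eq_bigr => X _ do rewrite -[b2R _]mulr1.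
  by rewrite E; apply: eq_bigr => X _; rewrite mulr1.
have E2 : ES * (2 * a) = n%:R * a.
  have -> : 2 * a = den - (n%:R - 1) by rewrite /den; ring.
  by rewrite mulrBr {1}ES_fix; field; rewrite gt_eqF.
have a2 : 2 * a != 0 by rewrite mulf_neq0 // gt_eqF.
by apply: (mulIf a2); rewrite E2; field.
Qed.

(* Each summand depends on row i only through the bit X i j, which makes the
   identity amenable to resampling row i. *)
Lemma two_colsum_spread (X : Table) (j : 'I_m) :
  2 * ((colsum X j)%:R * (n%:R - (colsum X j)%:R)) =
  \sum_i (b2R (X i j) * (n%:R - 1 - (colsum_but X i j)%:R)
          + (1 - b2R (X i j)) * (colsum_but X i j)%:R) :> R.
Proof.
rewrite (eq_bigr (fun i => (colsum X j)%:R + (n%:R - 2 * (colsum X j)%:R) * b2R (X i j))).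
  by rewrite sum_col_affine; ring.
by move=> i _; rewrite colsum_butE; case: (X i j); rewrite ?b2R_true ?b2R_false; ring.
Qed.

Lemma sum_cond_spread (X : Table) (j : 'I_m) :
  \sum_i (cond_prob X i j * (n%:R - 1 - (colsum_but X i j)%:R)
          + (1 - cond_prob X i j) * (colsum_but X i j)%:R) =
  2 * (n%:R - 2) / den * ((colsum X j)%:R * (n%:R - (colsum X j)%:R))
  + n%:R * a * (n%:R - 1) / den.
Proof.
have d0 := den_gt0; set S := ((colsum X j)%:R : R).
rewrite (eq_bigr (fun i => (2 * S * (n%:R - 1 - S) + a * (n%:R - 1)) / den
                           + (2 * (2 * S - n%:R) / den) * b2R (X i j))).
  by rewrite sum_col_affine; field; rewrite gt_eqF.
move=> i _; rewrite /cond_prob /pred_prob colsum_butE -/S.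
by move: d0; rewrite /den => d0; case: (X i j); rewrite ?b2R_true ?b2R_false; field; rewrite gt_eqF.
Qed.

Lemma mean_colsum_spread (j : 'I_m) :
  (\sum_X prior X * ((colsum X j)%:R * (n%:R - (colsum X j)%:R))) * (2 + 4 * a) =
  n%:R * (n%:R - 1) * a.
Proof.
set V := \sum_X _; have d0 := den_gt0.
have V_fix : 2 * V = 2 * (n%:R - 2) / den * V + n%:R * a * (n%:R - 1) / den.
  rewrite -sum_prior_affine /V big_distrr /=.
  under eq_bigr => X _ do rewrite mulrCA two_colsum_spread big_distrr /=.
  under [RHS]eq_bigr => X _ do rewrite -sum_cond_spread big_distrr /=.
  rewrite exchange_big [RHS]exchange_big; apply: eq_bigr => i _ /=.
  apply: prior_resample_bit => X b; by rewrite colsum_but_set_row.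
have -> : 2 + 4 * a = 2 * den - 2 * (n%:R - 2) by rewrite /den; ring.
have -> : V * (2 * den - 2 * (n%:R - 2)) = den * (2 * V - 2 * (n%:R - 2) / den * V).
  by field; rewrite gt_eqF.
by rewrite V_fix addrAC subrr add0r; field; rewrite gt_eqF.
Qed.

Lemma mean_colsum_spread_le (j : 'I_m) :
  \sum_X prior X * ((colsum X j)%:R * (n%:R - (colsum X j)%:R)) <= n%:R ^+ 2 * a / 2.
Proof.
have a4 : 0 < 2 + 4 * a by move: a_gt0; lra.
rewrite -(ler_pM2r a4) mean_colsum_spread.
have n0 := n_gt0R; have na : 0 <= n%:R * a by rewrite mulr_ge0 // ltW.
have -> : n%:R ^+ 2 * a / 2 * (2 + 4 * a) = n%:R * (n%:R * a) * (1 + 2 * a) by field.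
have -> : n%:R * (n%:R - 1) * a = (n%:R - 1) * (n%:R * a) by ring.
nra.
Qed.

(** * The fingerprinting argument *)

Variables (d : nat) (M : mechanism R n m).
Hypotheses (d_le_m : (d <= m)%N) (M_alg : is_randomized_alg M).

Definition profile (X : Table) : input n m := [ffun k => encode d (X k)].

Definition n_mid : R := (m - d)%:R.

Definition score (s : 'S_m) (j : 'I_m) : R :=
  if (j < d)%N then (mid_after d s j)%:R else 0.

(* How much the output s follows the bits of row i beyond their prediction
   from the other rows. *)
Definition corr (i : 'I_n) (X : Table) (s : 'S_m) : R :=
  \sum_j score s j * (b2R (X i j) - cond_prob X i j).

Definition total_corr : R := \sum_X prior X * \sum_s M (profile X) s * \sum_i corr i X s.

Definition resampled (i : 'I_n) (X : Table) (f : 'S_m -> R) : R :=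
  \sum_y cond_row X i y * \sum_s M (profile (set_row X i y)) s * f s.

Lemma M_ge0 P s : 0 <= M P s.
Proof. by have [] := M_alg P. Qed.

Lemma M_sum1 P : \sum_s M P s = 1.
Proof. by have [] := M_alg P. Qed.

Lemma score01 s j : 0 <= score s j <= n_mid.
Proof.
rewrite /score /n_mid; case: ifP => _; last by rewrite lexx ler0n.
by rewrite ler0n ler_nat mid_after_le.
Qed.

Lemma corr_le i X s : corr i X s <= m%:R * n_mid.
Proof.
rewrite /corr -[m in m%:R]card_ord mulr_natl -sumr_const; apply: ler_sum => j _.
have /andP[w0 w1] := score01 s j; have /andP[q0 q1] := cond_prob01 X i j.
have b1 : b2R (X i j) - cond_prob X i j <= 1.
  by case: (X i j); rewrite ?b2R_true ?b2R_false; lra.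
by apply: le_trans (ler_wpM2l w0 b1) _; rewrite mulr1.
Qed.

Lemma sum_corr X s :
  \sum_i corr i X s = a / den * \sum_j score s j * (2 * (colsum X j)%:R - n%:R).
Proof.
rewrite /corr exchange_big big_distrr /=; apply: eq_bigr => j _.
rewrite -big_distrr /= sumrB sum_b2R_col sum_cond_prob.
by move: den_gt0; rewrite /den => d0; field; rewrite gt_eqF.
Qed.

Lemma profile_neighboring X i y : neighboring (profile X) (profile (set_row X i y)).
Proof. by exists i => k /negPf ki; rewrite !ffunE ki. Qed.

Lemma resampled_set_row i X b f : resampled i (set_row X i b) f = resampled i X f.
Proof. by apply: eq_bigr => y _; rewrite cond_row_set_row set_row_set_row. Qed.

Lemma resampled_affine i X (f g : 'S_m -> R) c1 c2 c3 :
  resampled i X (fun s => c1 * f s + c2 * g s + c3) =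
  c1 * resampled i X f + c2 * resampled i X g + c3.
Proof.
rewrite /resampled -sum_affine ?cond_row_sum1 //; apply: eq_bigr => y _.
by rewrite sum_affine ?M_sum1.
Qed.

Lemma resampled_const i X c : resampled i X (fun _ => c) = c.
Proof.
rewrite /resampled (eq_bigr (fun y => cond_row X i y * c)) => [|y _].
  by rewrite -big_distrl /= cond_row_sum1 mul1r.
by rewrite -big_distrl /= M_sum1 mul1r.
Qed.

Lemma resampled_le i X (f g : 'S_m -> R) : (forall s, f s <= g s) ->
  resampled i X f <= resampled i X g.
Proof.
move=> fg; apply: ler_sum => y _; apply: ler_wpM2l; first exact: cond_row_ge0.
by apply: ler_sum => s _; apply: ler_wpM2l; [exact: M_ge0 | exact: fg].
Qed.

Lemma sum_resampled i X (c : Row -> R) (f : Row -> 'S_m -> R) :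
  \sum_b c b * resampled i X (f b) = resampled i X (fun s => \sum_b c b * f b s).
Proof.
rewrite /resampled; under eq_bigr => b _ do rewrite big_distrr /=.
rewrite exchange_big /=; apply: eq_bigr => y _.
under eq_bigr => b _ do rewrite mulrCA big_distrr /=.
rewrite -big_distrr /= exchange_big /=; congr (_ * _); apply: eq_bigr => s _.
by rewrite big_distrr /=; apply: eq_bigr => b _; ring.
Qed.

Lemma mean_resampled_corr i : \sum_X prior X * resampled i X (corr i X) = 0.
Proof.
pose Phi X j := resampled i X (fun s => score s j).
have corrE X : resampled i X (corr i X) =
    \sum_j (b2R (X i j) * Phi X j - cond_prob X i j * Phi X j).
  rewrite /corr /Phi /resampled.
  under eq_bigr => y _ do (under eq_bigr => s _ do rewrite big_distrr /=;
    rewrite exchange_big /= big_distrr /=).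
  rewrite exchange_big /=; apply: eq_bigr => j _.
  rewrite !big_distrr -sumrB /=; apply: eq_bigr => y _.
  by rewrite !big_distrr -sumrB /=; apply: eq_bigr => s _; ring.
under eq_bigr => X _ do rewrite corrE big_distrr /=.
rewrite exchange_big /=; apply: big1 => j _.
under eq_bigr => X _ do rewrite mulrBr.
rewrite sumrB (@prior_resample_b2R i j (Phi^~ j)) ?subrr // => X b.
exact: resampled_set_row.
Qed.

Lemma resampled_corr_sqr_le i X s :
  \sum_b cond_row X i b * corr i (set_row X i b) s ^+ 2 <= m%:R * n_mid ^+ 2 / 4.
Proof.
rewrite (eq_bigr (fun b => cond_row X i b *
    (\sum_j score s j * (b2R (b j) - cond_prob X i j)) ^+ 2)) => [|b _]; last first.
  by rewrite /corr; under eq_bigr => j _ do rewrite set_row_at cond_prob_set_row.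
rewrite bern_prod_variance.
rewrite (_ : _ / 4 = \sum_(j : 'I_m) n_mid ^+ 2 / 4); last first.
  by rewrite sumr_const card_ord -mulr_natl; ring.
apply: ler_sum => j _.
have /andP[w0 w1] := score01 s j; have /andP[q0 q1] := cond_prob01 X i j.
have w2 : score s j ^+ 2 <= n_mid ^+ 2 by rewrite ler_sqr ?nnegrE ?ler0n.
have q4 : cond_prob X i j * (1 - cond_prob X i j) <= 1 / 4.
  by have := sqr_ge0 (cond_prob X i j - 1 / 2); nra.
have q0' : 0 <= cond_prob X i j * (1 - cond_prob X i j) by apply: mulr_ge0; lra.
apply: le_trans (ler_wpM2r q0' w2) _.
by apply: le_trans (ler_wpM2l (sqr_ge0 n_mid) q4) _; rewrite mul1r.
Qed.

Lemma mean_resampled_corr_sqr i :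
  \sum_X prior X * resampled i X (fun s => corr i X s ^+ 2) <= m%:R * n_mid ^+ 2 / 4.
Proof.
rewrite (prior_resample _ i) -[leRHS]mul1r -[e in _ <= e * _]prior_sum1 big_distrl /=.
apply: ler_sum => X _; apply: ler_wpM2l; first exact: ltW (prior_gt0 X).
under eq_bigr => b _ do rewrite resampled_set_row.
rewrite sum_resampled -[leRHS](resampled_const i X); apply: resampled_le => s.
exact: resampled_corr_sqr_le.
Qed.

Lemma corr_dp_le i X delta t : is_DP 1 delta M -> 0 < t ->
  \sum_s M (profile X) s * corr i X s <=
  expR 1 * resampled i X (fun s => 1 / 2 * corr i X s + 1 / (4 * t) * corr i X s ^+ 2 + t / 4)
  + delta * (m%:R * n_mid).
Proof.
move=> dp t0; have B0 : 0 <= m%:R * n_mid by rewrite mulr_ge0 ?ler0n.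
set q := fun s => _ + _ + t / 4.
have each_y y : \sum_s M (profile X) s * corr i X s <=
    expR 1 * \sum_s M (profile (set_row X i y)) s * q s + delta * (m%:R * n_mid).
  apply: (@le_trans _ _ (\sum_s M (profile X) s * Num.max (corr i X s) 0)).
    by apply: ler_sum => s _; rewrite ler_wpM2l ?M_ge0 // le_max lexx.
  apply: le_trans (dp_sum_le (dp _ _ (profile_neighboring X i y)) B0 _) _.
    by move=> s; rewrite le_max lexx orbT /= ge_max corr_le B0.
  rewrite lerD2r ler_wpM2l ?expR_ge0 //; apply: ler_sum => s _.
  by rewrite ler_wpM2l ?M_ge0 // maxr0_le_quad.
rewrite -[e in e <= _]mul1r -[e in e * _ <= _](cond_row_sum1 X i) big_distrl /=.
rewrite -[e in _ + e]mul1r -[e in _ + e * _](cond_row_sum1 X i) big_distrl /=.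
rewrite /resampled big_distrr -big_split /=; apply: ler_sum => y _.
by rewrite mulrCA -mulrDr; apply: ler_wpM2l; [exact: cond_row_ge0 | exact: each_y].
Qed.

Lemma sumK_profile_ge X s :
  n_mid * \sum_(j : 'I_m | (j < d)%N) (colsum X j)%:R
  - \sum_j score s j * (2 * (colsum X j)%:R - n%:R) <= (sumK (profile X) s)%:R.
Proof.
pose K k j := if X k j then (m - d - mid_after d s j)%N else mid_after d s j.
have KE j : \sum_k (K k j)%:R =
    n_mid * (colsum X j)%:R - (mid_after d s j)%:R * (2 * (colsum X j)%:R - n%:R) :> R.
  rewrite (eq_bigr (fun k => (mid_after d s j)%:R
      + (n_mid - 2 * (mid_after d s j)%:R) * b2R (X k j))) => [|k _].
    by rewrite sum_col_affine; ring.
  rewrite /K /n_mid; case: (X k j); rewrite ?b2R_true ?b2R_false; last by ring.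
  by rewrite natrB ?mid_after_le //; ring.
apply: le_trans (_ : _ <= (\sum_k \sum_(j : 'I_m | (j < d)%N) K k j)%N%:R) _; last first.
  by rewrite ler_nat /sumK; apply: leq_sum => k _; rewrite ffunE; exact: kendall_encode_ge.
rewrite natr_sum; under eq_bigr => k _ do rewrite natr_sum.
rewrite exchange_big /= (eq_bigr _ (fun j _ => KE j)) sumrB -big_distrr /= lerD2l lerN2.
rewrite [leLHS]big_mkcond; apply: ler_sum => j _.
by rewrite /score; case: ifP; rewrite ?mul0r.
Qed.

Definition majority (X : Table) : Row := [ffun j => (n < 2 * colsum X j)%N].

Lemma mismatch_majority_le (X : Table) (j : 'I_m) :
  \sum_k ((X k j != majority X j) : nat)%:R
  <= 2 * (colsum X j)%:R * (n%:R - (colsum X j)%:R) / n%:R :> R.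
Proof.
have Sn : (colsum X j)%:R <= n%:R :> R by rewrite ler_nat colsum_le.
have S0 : 0 <= (colsum X j)%:R :> R by rewrite ler0n.
have n0 := n_gt0R; rewrite ler_pdivlMr // /majority ffunE.
case: (ltnP n (2 * colsum X j)) => maj.
  have {}maj : n%:R < 2 * (colsum X j)%:R :> R by rewrite -natrM ltr_nat.
  rewrite (eq_bigr (fun k => 1 + (-1) * b2R (X k j))) => [|k _]; last first.
    by case: (X k j); rewrite ?b2R_true ?b2R_false /=; ring.
  by rewrite sum_col_affine; nra.
have {}maj : 2 * (colsum X j)%:R <= n%:R :> R by rewrite -natrM ler_nat.
rewrite (eq_bigr (fun k => 0 + 1 * b2R (X k j))) => [|k _]; last first.
  by case: (X k j); rewrite ?b2R_true ?b2R_false /=; ring.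
by rewrite sum_col_affine; nra.
Qed.

Lemma OPT_profile_le X :
  n%:R * OPT R (profile X) <=
  4 * m%:R / n%:R * \sum_(j : 'I_m | (j < d)%N) ((colsum X j)%:R * (n%:R - (colsum X j)%:R)).
Proof.
have n0 := n_gt0R; rewrite /OPT mulrC divfK ?gt_eqF //.
case: arg_minnP => [//|s0 _ s0_min].
apply: le_trans (_ : _ <= (sumK (profile X) (encode d (majority X)))%:R) _.
  by rewrite ler_nat s0_min.
apply: le_trans (_ : _ <= (\sum_k 2 * m * \sum_j mismatch d (X k) (majority X) j)%N%:R) _.
  by rewrite ler_nat; apply: leq_sum => k _; rewrite ffunE kendall_encode_le.
rewrite -big_distrr /= natrM natr_sum; under eq_bigr => k _ do rewrite natr_sum.
rewrite exchange_big /= [in leRHS]big_mkcond /= !big_distrr /=; apply: ler_sum => j _.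
case: ifP => jd; last by rewrite big1 ?mulr0 ?mul0r ?mulr0 // => k _; rewrite /mismatch jd.
rewrite (eq_bigr (fun k => ((X k j != majority X j) : nat)%:R)) => [|k _]; last first.
  by rewrite /mismatch jd.
apply: le_trans (ler_wpM2l (ler0n _ _) (mismatch_majority_le X j)) _.
by rewrite natrM le_eqVlt; apply/orP; left; apply/eqP; field; rewrite gt_eqF.
Qed.

Lemma approx_profile X alpha beta : 0 <= alpha -> is_approx alpha beta M ->
  n_mid * \sum_(j : 'I_m | (j < d)%N) (colsum X j)%:R
  - alpha * (4 * m%:R / n%:R) *
    \sum_(j : 'I_m | (j < d)%N) ((colsum X j)%:R * (n%:R - (colsum X j)%:R))
  - n%:R * beta
  <= \sum_s M (profile X) s * \sum_j score s j * (2 * (colsum X j)%:R - n%:R).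
Proof.
move=> alpha0 approx; have n0 := n_gt0R.
set SS := \sum_(j | _) _; set VV := \sum_(j | _) _.
have Kbar_le : \sum_s M (profile X) s * (sumK (profile X) s)%:R
    <= alpha * (4 * m%:R / n%:R) * VV + n%:R * beta.
  have -> : \sum_s M (profile X) s * (sumK (profile X) s)%:R =
            n%:R * \sum_s M (profile X) s * Kbar R s (profile X).
    by rewrite big_distrr /=; apply: eq_bigr => s _; rewrite /Kbar; field; rewrite gt_eqF.
  apply: le_trans (ler_wpM2l (ltW n0) (approx (profile X))) _.
  rewrite mulrDr mulrCA -mulrA lerD2r.
  by apply: ler_wpM2l => //; exact: OPT_profile_le.
have K_ge : n_mid * SS - \sum_s M (profile X) s * \sum_j score s j * (2 * (colsum X j)%:R - n%:R)
    <= \sum_s M (profile X) s * (sumK (profile X) s)%:R.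
  rewrite -[n_mid * SS]mul1r -[e in e * _](M_sum1 (profile X)) big_distrl -sumrB /=.
  apply: ler_sum => s _; rewrite -mulrBr.
  by apply: ler_wpM2l; [exact: M_ge0 | exact: sumK_profile_ge].
move: (le_trans K_ge Kbar_le); lra.
Qed.

Lemma sum_ord_lt_const (c : R) : \sum_(j : 'I_m | (j < d)%N) c = d%:R * c.
Proof. by rewrite (big_ord_narrow d_le_m) sumr_const card_ord mulr_natl. Qed.

Lemma accuracy_lower_bound alpha beta : 0 <= alpha -> is_approx alpha beta M ->
  a * n%:R / den * (n_mid * d%:R / 2 - 2 * alpha * a * m%:R * d%:R - beta) <= total_corr.
Proof.
move=> alpha0 approx; have d0 := den_gt0; have n0 := n_gt0R.
pose c := alpha * (4 * m%:R / n%:R).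
have c0 : 0 <= c by rewrite mulr_ge0 // divr_ge0 ?mulr_ge0 ?ler0n // ltW.
pose SS X := \sum_(j : 'I_m | (j < d)%N) (colsum X j)%:R :> R.
pose VV X := \sum_(j : 'I_m | (j < d)%N) ((colsum X j)%:R * (n%:R - (colsum X j)%:R)) :> R.
have ESS : \sum_X prior X * SS X = d%:R * (n%:R / 2).
  under eq_bigr => X _ do rewrite /SS big_distrr /=.
  by rewrite exchange_big /= (eq_bigr _ (fun j _ => mean_colsum j)) sum_ord_lt_const.
have EVV : \sum_X prior X * VV X <= d%:R * (n%:R ^+ 2 * a / 2).
  under eq_bigr => X _ do rewrite /VV big_distrr /=.
  rewrite exchange_big /= -sum_ord_lt_const; apply: ler_sum => j _.
  exact: mean_colsum_spread_le.
have -> : total_corr = a / den * \sum_X prior X *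
      \sum_s M (profile X) s * \sum_j score s j * (2 * (colsum X j)%:R - n%:R).
  rewrite big_distrr /=; apply: eq_bigr => X _; rewrite mulrCA; congr (_ * _).
  by rewrite big_distrr /=; apply: eq_bigr => s _; rewrite sum_corr mulrCA.
have -> : a * n%:R / den * (n_mid * d%:R / 2 - 2 * alpha * a * m%:R * d%:R - beta) =
    a / den * (n_mid * (d%:R * (n%:R / 2)) - c * (d%:R * (n%:R ^+ 2 * a / 2)) - n%:R * beta).
  by rewrite /c; field; rewrite !gt_eqF.
apply: ler_wpM2l; first by rewrite divr_ge0 // ltW.
apply: le_trans (_ : _ <= \sum_X prior X * (n_mid * SS X + (- c) * VV X + - (n%:R * beta))) _.
  rewrite sum_affine ?prior_sum1 // ESS mulNr lerD2r lerD2l lerN2.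
  by apply: ler_wpM2l.
apply: ler_sum => X _; rewrite mulNr; apply: ler_wpM2l; first exact: ltW (prior_gt0 X).
exact: approx_profile.
Qed.

Lemma privacy_upper_bound delta t : 0 < t -> is_DP 1 delta M ->
  total_corr <= n%:R * (expR 1 * (m%:R * n_mid ^+ 2 / (16 * t) + t / 4) + delta * (m%:R * n_mid)).
Proof.
move=> t0 dp; set C := expR 1 * _ + _.
have -> : total_corr = \sum_i \sum_X prior X * \sum_s M (profile X) s * corr i X s.
  rewrite exchange_big; apply: eq_bigr => X _ /=; rewrite -big_distrr /=; congr (_ * _).
  by rewrite exchange_big; apply: eq_bigr => s _; rewrite big_distrr.
rewrite -[n in n%:R]card_ord mulr_natl -sumr_const; apply: ler_sum => i _.
apply: le_trans (_ : _ <= \sum_X prior X * (expR 1 * resampled i X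
    (fun s => 1 / 2 * corr i X s + 1 / (4 * t) * corr i X s ^+ 2 + t / 4)
    + delta * (m%:R * n_mid))) _.
  by apply: ler_sum => X _; rewrite ler_wpM2l ?(ltW (prior_gt0 X)) ?corr_dp_le.
rewrite (eq_bigr (fun X => prior X * (expR 1 / 2 * resampled i X (corr i X)
    + expR 1 / (4 * t) * resampled i X (fun s => corr i X s ^+ 2)
    + (expR 1 * (t / 4) + delta * (m%:R * n_mid))))) => [|X _]; last first.
  by rewrite resampled_affine; ring.
rewrite sum_affine ?prior_sum1 // mean_resampled_corr mulr0 add0r.
have e0 : 0 <= expR 1 / (4 * t) :> R by rewrite divr_ge0 ?expR_ge0 // mulr_ge0 // ltW.
apply: le_trans (lerD (ler_wpM2l e0 (mean_resampled_corr_sqr i)) (lexx _)) _.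
by rewrite /C le_eqVlt; apply/orP; left; apply/eqP; field; rewrite gt_eqF.
Qed.

End BetaBernoulliPrior.

Lemma half_bounds (m : nat) : (2 <= m)%N ->
  [/\ (m./2 <= m)%N, (m <= 2 * (m - m./2))%N & (m <= 3 * m./2)%N].
Proof.
move=> m2; have := odd_double_half m; have := leq_b1 (odd m).
rewrite -muln2 => o1 mE; split; lia.
Qed.

Section LowerBound.
Variables (R : realType) (n m : nat) (alpha a delta : R) (M : mechanism R n m).
Hypotheses (n_gt0 : (0 < n)%N) (alpha_ge0 : 0 <= alpha).
Hypotheses (a_gt0 : 0 < a) (a_le : a <= 1 / 2) (alpha_a : alpha * a * 16 <= 1).
Hypothesis n_small : n%:R <= a / (24 * expR 1) * Num.sqrt m%:R.
Hypothesis delta_small : delta * n%:R <= a / 96.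
Hypothesis M_alg : is_randomized_alg M.

Lemma sqrt_m_ge48 : 48 <= Num.sqrt m%:R :> R.
Proof.
have n1 : 1 <= n%:R :> R by rewrite ler1n.
have e1 : 1 <= expR 1 :> R by have := @expR_ge1Dx R 1; lra.
have : 1 <= a / (24 * expR 1) * Num.sqrt m%:R by apply: le_trans n_small.
have s0 : 0 <= Num.sqrt m%:R :> R by exact: sqrtr_ge0.
rewrite mulrAC ler_pdivlMr ?mulr_gt0 ?expR_gt0 //.
have : a * Num.sqrt m%:R <= 1 / 2 * Num.sqrt m%:R by apply: ler_wpM2r.
nra.
Qed.

Lemma accuracy_bound_half d : (d <= m)%N -> (m <= 2 * (m - d))%N -> (m <= 3 * d)%N ->
  is_approx alpha (1 / 48 * m%:R ^+ 2) M -> a * (n_mid R m d * d%:R / 8) <= total_corr a d M.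
Proof.
move=> dm m2L m3d approx.
apply: le_trans (accuracy_lower_bound a_gt0 n_gt0 dm M_alg alpha_ge0 approx).
set L := n_mid R m d.
have mL : m%:R <= 2 * L by rewrite (_ : 2 * L = (2 * (m - d))%:R) ?ler_nat // natrM.
have md : m%:R <= 3 * d%:R :> R by rewrite -natrM ler_nat.
have L0 : 0 <= L by exact: ler0n.
have bracket : L * d%:R / 8 <= L * d%:R / 2 - 2 * alpha * a * m%:R * d%:R - 1 / 48 * m%:R ^+ 2.
  have : alpha * a * (m%:R * d%:R) <= 1 / 16 * (m%:R * d%:R).
    by apply: ler_wpM2r; [rewrite mulr_ge0 ?ler0n | move: alpha_a; lra].
  have : m%:R * m%:R <= (2 * L) * (3 * d%:R) by apply: ler_pM; rewrite ?ler0n.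
  have : m%:R * d%:R <= 2 * L * d%:R by apply: ler_wpM2r; rewrite ?ler0n.
  rewrite expr2; lra.
have d0 := den_gt0 a_gt0 n_gt0.
have den_le : den n a <= n%:R by move: a_le; rewrite /den; lra.
apply: ler_pM => //; first exact: ltW.
  by rewrite divr_ge0 // mulr_ge0 ?ler0n.
by rewrite ler_pdivlMr // ler_wpM2l // ltW.
Qed.

Lemma privacy_bound d : (d < m)%N -> is_DP 1 delta M ->
  total_corr a d M <= n_mid R m d * (a * m%:R / 48).
Proof.
move=> dm dp; move: sqrt_m_ge48 n_small; set s := Num.sqrt _ => s48 ns.
have sm : s ^+ 2 = m%:R by rewrite sqr_sqrtr ?ler0n.
set L := n_mid R m d; have L0 : 0 < L by rewrite ltr0n subn_gt0.
have s0 : 0 < s by lra.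
have t0 : 0 < L * s / 2 by rewrite divr_gt0 ?mulr_gt0.
apply: le_trans (privacy_upper_bound a_gt0 n_gt0 d M_alg t0 dp) _.
have -> : n%:R * (expR 1 * (m%:R * L ^+ 2 / (16 * (L * s / 2)) + L * s / 2 / 4)
            + delta * (m%:R * L)) = L * (n%:R * expR 1 * s / 4 + delta * n%:R * m%:R).
  by rewrite -sm; field; rewrite !gt_eqF.
apply: ler_wpM2l; first exact: ltW.
have e0 : 0 < expR 1 :> R by exact: expR_gt0.
have : n%:R * expR 1 * s <= a / (24 * expR 1) * s * expR 1 * s.
  by apply: ler_wpM2r; [exact: ltW | apply: ler_wpM2r => //; exact: ltW].
have -> : a / (24 * expR 1) * s * expR 1 * s = a * s ^+ 2 / 24 by field; rewrite gt_eqF.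
have : delta * n%:R * m%:R <= a / 96 * m%:R by apply: ler_wpM2r; rewrite ?ler0n.
rewrite -sm; lra.
Qed.

Lemma no_private_accurate_mechanism :
  is_DP 1 delta M -> ~ is_approx alpha (1 / 48 * m%:R ^+ 2) M.
Proof.
move=> dp approx.
have m2 : (2 <= m)%N.
  rewrite -(ler_nat R) -[m%:R]sqr_sqrtr ?ler0n // expr2.
  by have := sqrt_m_ge48; nra.
have [dm m2L m3d] := half_bounds m2; have dlt : (m./2 < m)%N by lia.
have := le_trans (accuracy_bound_half dm m2L m3d approx) (privacy_bound dlt dp).
set L := n_mid R m m./2; have L0 : 0 < L by rewrite ltr0n subn_gt0.
have md : m%:R <= 3 * (m./2)%:R :> R by rewrite -natrM ler_nat.
have m0 : 0 < m%:R :> R by rewrite ltr0n; lia.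
have -> : a * (L * (m./2)%:R / 8) = (a * L) * ((m./2)%:R / 8) by ring.
have -> : L * (a * m%:R / 48) = (a * L) * (m%:R / 48) by ring.
by rewrite ler_pM2l ?mulr_gt0 //; lra.
Qed.
End LowerBound.

Theorem lemma3 (R : realType) (alpha : R) :
  0 < alpha ->
  exists c : R, 0 < c /\
  forall (mk nk : nat -> nat) (dk : nat -> R),
    (forall k, (0 < nk k)%N) ->
    (forall k, 0 <= dk k) ->
    (* n = o(sqrt m) *)
    (forall e : R, 0 < e -> exists K, forall k, (K <= k)%N ->
        (nk k)%:R <= e * Num.sqrt ((mk k)%:R)) ->
    (* delta = o(1/n) *)
    (forall e : R, 0 < e -> exists K, forall k, (K <= k)%N ->
        dk k * (nk k)%:R <= e) ->
    exists K, forall k, (K <= k)%N ->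
      forall M : mechanism R (nk k) (mk k),
        is_randomized_alg M ->
        is_DP 1 (dk k) M ->
        ~ is_approx alpha (c * ((mk k)%:R ^+ 2)) M.
Proof.
move=> alpha0; pose a : R := 1 / (16 * (alpha + 1)).
have alpha1 : 0 < alpha + 1 by lra.
have a0 : 0 < a by rewrite divr_gt0 // mulr_gt0.
have a_le : a <= 1 / 2 by rewrite ler_pdivrMr ?mulr_gt0 //; lra.
have alpha_a : alpha * a * 16 <= 1.
  have -> : alpha * a * 16 = alpha / (alpha + 1) by rewrite /a; field; rewrite gt_eqF.
  by rewrite ler_pdivrMr // mul1r; lra.
exists (1 / 48); split=> [|mk nk dk n0 d0 n_small d_small]; first by rewrite divr_gt0.
have e0 : 0 < a / (24 * expR 1) by rewrite divr_gt0 // mulr_gt0 // expR_gt0.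
have [K1 HK1] := n_small _ e0.
have a96 : 0 < a / 96 by rewrite divr_gt0.
have [K2 HK2] := d_small _ a96.
exists (maxn K1 K2) => k; rewrite geq_max => /andP[k1 k2] M.
exact: no_private_accurate_mechanism (n0 k) (ltW alpha0) a0 a_le alpha_a (HK1 k k1) (HK2 k k2).
Qed.
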